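(* For every integer $n$ and every integer $r$ with $3\le r\le n-2$, $A(n,r-1)\,(A(n,r-1)-1) > 2A(n,3r-2)$.
   Context: $A(n,q)$ is the Eulerian number, the number of permutations of $\{1,\dots,n\}$ with exactly $q$ ascents, with the convention $A(n,q)=0$ if $q\ge n$. *)

From mathcomp Require Import all_boot all_order all_fingroup.
Set Implicit Arguments. Unset Strict Implicit. Unset Printing Implicit Defensive.

Definition ascents (n : nat) (s : 'S_n) : nat :=
  #|[set i : 'I_n | [exists j : 'I_n, (val j == (val i).+1) && (s i < s j)]]|.

Definition eulerian (n q : nat) : nat :=
  #|[set s : 'S_n | ascents s == q]|.

(* Write a = r - 1, so that the claim reads 2 A(n,3a+1) < A(n,a) (A(n,a) - 1) for
   2 <= a <= n - 3.  Inserting the letter n into the words of the permutations of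
   {0,...,n-1} gives the recurrence A(n+1,k) = (k+1) A(n,k) + (n+1-k) A(n,k-1).  Hence
   A(n+1,a) >= (a+1) A(n,a), and with Worpitzky's identity
   x^n = sum_j A(n,j) binom(x+n-1-j, n) also A(n,k) <= (k+1)^n.  Since (a+1)^2 >= 3a+2,
   the stronger inequality 2 (3a+2)^n < A(n,a) (A(n,a) - 1) passes from n to n+1, so it
   only has to be checked once: at n = 3a+2 it follows from A(3a+2,a) >= (a+1)^(2a+1) when
   a >= 30 and is checked by evaluation when 3 <= a <= 29; for a = 2 it first holds at
   n = 10, and n = 8, 9 are checked directly.  When n < 3a+2, A(n,3a+1) = 0 while
   A(n,a) >= (a+1)^(n-a-1) >= 9. *)

From Stdlib Require Import NArith.
From mathcomp Require Import all_boot all_order all_fingroup zify.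
Set Implicit Arguments. Unset Strict Implicit. Unset Printing Implicit Defensive.

Fixpoint eul (n k : nat) : nat :=
  if n is n'.+1 then
    k.+1 * eul n' k + (if k is k'.+1 then (n' - k') * eul n' k' else 0)
  else k == 0.

Arguments eul : simpl never.

Lemma eulS n k :
  eul n.+1 k = k.+1 * eul n k + (if k is k'.+1 then (n - k') * eul n k' else 0).
Proof. by []. Qed.

Lemma eul_eq0 n k : 0 < k -> n <= k -> eul n k = 0.
Proof.
elim: n k => [|n IHn] [|k] // _ le_nk.
rewrite eulS IHn ?(ltnW le_nk) //.
have -> : n - k = 0 by lia.
by rewrite muln0.
Qed.

Lemma eul_last n : eul n.+1 n = 1.
Proof.
elim: n => [|n IHn] //.
by rewrite eulS eul_eq0 // IHn muln0 muln1; lia.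
Qed.

Lemma leq_eulS n k : k.+1 * eul n k <= eul n.+1 k.
Proof. exact: leq_addr. Qed.

Lemma leq_expn_eul m n k : k.+1 ^ m * eul n k <= eul (m + n) k.
Proof.
elim: m => [|m IHm]; first by rewrite mul1n.
rewrite expnS -mulnA addSn (leq_trans _ (leq_eulS _ _)) //.
by rewrite leq_mul2l IHm orbT.
Qed.

Lemma expn_leq_eul n k : k < n -> k.+1 ^ (n - k.+1) <= eul n k.
Proof.
move=> lt_kn; have := leq_expn_eul (n - k.+1) k.+1 k.
by rewrite eul_last muln1 subnK.
Qed.

Lemma mul_bin_shift x n j : j < n ->
  x * 'C(x + (n - j.+1), n) =
    (n - j) * 'C(x + (n - j.+1), n.+1) + j.+1 * 'C((x + (n - j.+1)).+1, n.+1).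
Proof.
move=> lt_jn; set y := x + (n - j.+1).
rewrite binS mulnDr addnA -mulnDl.
have -> : n - j + j.+1 = n.+1 by lia.
rewrite mul_bin_left -mulnDl.
have [le_ny | lt_yn] := leqP n y; last by rewrite bin_small ?muln0.
by congr (_ * _); rewrite /y; lia.
Qed.

Lemma worpitzky n x : 0 < n ->
  x ^ n = \sum_(j < n) eul n j * 'C(x + (n - j.+1), n).
Proof.
elim: n => [|m IHm] // _.
have [-> | m_gt0] := posnP m.
  by rewrite big_ord1 /= subnn !addn0 bin1 expn1 !mul1n.
rewrite expnS IHm // big_distrr /=.
under eq_bigr => j _.
  rewrite mulnCA mul_bin_shift // mulnDr.
  have -> : (x + (m - j.+1)).+1 = x + (m - j) by have := ltn_ord j; lia.
  over.
rewrite big_split /= addnC.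
under [in RHS]eq_bigr => j _ do rewrite eulS mulnDl subSS.
rewrite big_split /=.
congr (_ + _).
  rewrite big_ord_recr /= eul_eq0 // muln0 mul0n addn0.
  by apply: eq_bigr => j _; rewrite mulnCA mulnA.
rewrite big_ord_recl /= mul0n add0n.
by apply: eq_bigr => j _; rewrite /bump /= add0n mulnCA mulnA.
Qed.

Lemma eul_leq_expn n k : eul n k <= k.+1 ^ n.
Proof.
case: n => [|n]; first by case: k.
have [le_nk | lt_kn] := leqP n.+1 k; first by rewrite eul_eq0 // (leq_trans _ le_nk).
rewrite (worpitzky k.+1 (ltn0Sn n)) (bigD1 (Ordinal lt_kn)) //=.
have -> : k.+1 + (n.+1 - k.+1) = n.+1 by lia.
by rewrite binn muln1 leq_addr.
Qed.

Fixpoint asc (w : seq nat) : nat :=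
  if w is x :: w' then (if w' is y :: _ then (x < y) + asc w' else 0) else 0.

Definition insert_at (w : seq nat) (p m : nat) : seq nat := take p w ++ m :: drop p w.

Fixpoint asc_gain (w : seq nat) : seq bool :=
  if w is x :: w' then
    (if w' is y :: _ then false :: (y <= x) :: behead (asc_gain w') else [:: false; true])
  else [:: false].

Lemma asc_insert m w p : all (fun x => x < m) w -> p <= size w ->
  asc (insert_at w p m) = asc w + nth false (asc_gain w) p.
Proof.
elim: w p => [|x w IHw] p /=; first by rewrite leqn0 => _ /eqP ->.
case/andP=> lt_xm all_w; have /negbTE ltn_mx : ~~ (m < x) by rewrite -leqNgt ltnW.
case: w IHw all_w => [|y w] IHw all_w.
  by case: p => [|[|p]] //= _; rewrite /insert_at /= ?ltn_mx ?lt_xm.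
have /negbTE ltn_my : ~~ (m < y) by rewrite -leqNgt ltnW //; case/andP: all_w.
case: p => [|[|p]] le_p.
- by rewrite /insert_at /= ltn_mx addn0.
- by rewrite /insert_at /= lt_xm ltn_my ltnNge; case: (y <= x) => /=; lia.
- have := IHw p.+1 all_w le_p; rewrite /insert_at /= => ->.
  by rewrite nth_behead addnA.
Qed.

Lemma size_asc_gain w : size (asc_gain w) = (size w).+1.
Proof.
elim: w => [|x [|y w] IHw] //=.
by rewrite size_behead IHw.
Qed.

Lemma asc_leq_size w : asc w <= (size w).-1.
Proof.
elim: w => [|x [|y w] IHw] //=.
by move: IHw => /=; case: (x < y); lia.
Qed.

Lemma count_asc_gain w : count id (asc_gain w) = size w - asc w.
Proof.
elim: w => [|x [|y w] IHw] //=.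
have -> : count id (behead (asc_gain (y :: w))) = count id (asc_gain (y :: w)).
  by case: w IHw => [|z w] /=.
rewrite IHw /= ltnNge; have := asc_leq_size (y :: w).
by case: (y <= x) => /=; lia.
Qed.

Lemma sum_asc_insert m w k : all (fun x => x < m) w ->
  \sum_(p <- iota 0 (size w).+1) (asc (insert_at w p m) == k) =
    k.+1 * (asc w == k) + (if k is k'.+1 then (size w - k') * (asc w == k') else 0).
Proof.
move=> all_w.
under eq_big_seq => p.
  rewrite mem_iota ltnS => /andP[_ le_p]; rewrite asc_insert //.
  over.
set g := asc_gain w.
transitivity (\sum_(b <- g) (asc w + b == k)).
  by rewrite -[in RHS](mkseq_nth false g) big_map size_asc_gain.
have sum_count (a : pred bool) : \sum_(b <- g) (a b : nat) = count a g.
  by rewrite -sumn_count sumnE big_map.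
have count_negb : count negb g = (asc w).+1.
  rewrite (_ : count negb g = count (predC id) g) //.
  have := count_predC id g; rewrite size_asc_gain count_asc_gain.
  have := asc_leq_size w; lia.
have split_gain j (b : bool) :
    (asc w + b == j) = (asc w == j) * ~~ b + ((asc w).+1 == j) * b :> nat.
  by case: b; rewrite /= ?addn0 ?addn1 ?muln0 ?muln1 ?addn0.
under eq_bigr => b _ do rewrite split_gain.
rewrite big_split -!big_distrr /= !sum_count count_negb count_asc_gain.
by case: k => [|k]; rewrite ?eqSS; lia.
Qed.

Definition perm_words n := permutations (iota 0 n).

Definition insertions n := [seq insert_at w p n | w <- perm_words n, p <- iota 0 n.+1].

Lemma in_perm_words n w :
  w \in perm_words n -> [/\ size w = n, n \notin w & all (fun x => x < n) w].
Proof.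
rewrite mem_permutations => eq_w; split.
- by rewrite (perm_size eq_w) size_iota.
- by rewrite (perm_mem eq_w) mem_iota ltnn andbF.
- by apply/allP => x; rewrite (perm_mem eq_w) mem_iota.
Qed.

Lemma insert_at_perm n w p :
  perm_eq w (iota 0 n) -> perm_eq (insert_at w p n) (iota 0 n.+1).
Proof.
move=> eq_w; rewrite -addn1 iotaD cats1 /insert_at -cat1s perm_catCA cat_take_drop.
by rewrite perm_sym perm_rcons perm_cons perm_sym.
Qed.

Lemma insert_at_inj m w1 w2 p1 p2 : m \notin w1 -> m \notin w2 ->
  p1 <= size w1 -> p2 <= size w2 ->
  insert_at w1 p1 m = insert_at w2 p2 m -> w1 = w2 /\ p1 = p2.
Proof.
move=> m_w1 m_w2 le_p1 le_p2 eq_ins.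
have notin_take w p : m \notin w -> (m \in take p w) = false.
  by move=> m_w; apply/negbTE; apply: contra m_w; apply: mem_take.
have eq_p : p1 = p2.
  move: (congr1 (index m) eq_ins); rewrite /insert_at !index_cat !notin_take //.
  by rewrite !size_takel //= eqxx !addn0.
subst p2; split => //.
move/eqP: eq_ins; rewrite /insert_at eqseq_cat ?size_takel //.
case/andP => /eqP eq_take /eqP [eq_drop].
by rewrite -(cat_take_drop p1 w1) eq_take eq_drop cat_take_drop.
Qed.

Lemma insertions_uniq n : uniq (insertions n).
Proof.
apply: allpairs_uniq; [exact: permutations_uniq | exact: iota_uniq |].
move=> _ _ /allpairsPdep[v1 [q1 [v1P q1P ->]]] /allpairsPdep[v2 [q2 [v2P q2P ->]]].
move=> /= eq_ins.
have [size_v1 n_v1 _] := in_perm_words v1P; have [size_v2 n_v2 _] := in_perm_words v2P.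
move: q1P q2P; rewrite !mem_iota /= !add0n !ltnS -{1}size_v1 -size_v2 => le_q1 le_q2.
by have [-> ->] := insert_at_inj n_v1 n_v2 le_q1 le_q2 eq_ins.
Qed.

Lemma perm_insertions n : perm_eq (insertions n) (perm_words n.+1).
Proof.
have sub : {subset insertions n <= perm_words n.+1}.
  move=> _ /allpairsPdep[w [p [wP _ ->]]].
  by rewrite mem_permutations insert_at_perm // -mem_permutations.
have size_le : size (perm_words n.+1) <= size (insertions n).
  rewrite size_allpairs !size_permutations ?iota_uniq // !size_iota.
  by rewrite factS mulnC.
have [_ eq_mem] := uniq_min_size (insertions_uniq n) sub size_le.
exact: uniq_perm (insertions_uniq n) (permutations_uniq _) eq_mem.
Qed.

Lemma sum_asc_perm_words n k : \sum_(w <- perm_words n) (asc w == k) = eul n k.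
Proof.
elim: n k => [|n IHn] k; first by rewrite /perm_words /= big_seq1; case: k.
rewrite -(perm_big _ (perm_insertions n)) big_allpairs_dep /=.
under eq_big_seq => w /in_perm_words[size_w _ all_w].
  rewrite -{1}size_w (sum_asc_insert _ all_w) size_w.
  over.
rewrite big_split /= -big_distrr IHn eulS.
by case: k => [|k] /=; rewrite ?big1_eq // -big_distrr IHn.
Qed.

Definition perm_word n (s : 'S_n) : seq nat := [seq val (s i) | i <- enum 'I_n].

Lemma size_perm_word n (s : 'S_n) : size (perm_word s) = n.
Proof. by rewrite size_map size_enum_ord. Qed.

Lemma nth_perm_word n (s : 'S_n) (i : 'I_n) : nth 0 (perm_word s) i = s i.
Proof. by rewrite (nth_map i) ?nth_ord_enum // size_enum_ord. Qed.

Lemma asc_sum w : asc w = \sum_(0 <= i < (size w).-1) (nth 0 w i < nth 0 w i.+1).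
Proof.
elim: w => [|x [|y w] IHw]; [by rewrite big_geq | by rewrite big_geq |].
have -> : asc [:: x, y & w] = (x < y) + asc (y :: w) by [].
by rewrite IHw [size _]/= big_nat_recl.
Qed.

Lemma ascents_perm_word n (s : 'S_n) : ascents s = asc (perm_word s).
Proof.
rewrite asc_sum size_perm_word /ascents -sum1_card big_mkcond /=.
case: n s => [|n] s; first by rewrite big_ord0 big_geq.
rewrite big_ord_recr /= big_mkord in_set; under eq_bigr => i _ do rewrite in_set.
case: existsP => [[j /andP[/eqP j_max _]] | _].
  by have := ltn_ord j; rewrite j_max ltnn.
rewrite addn0; apply: eq_bigr => i _.
set i' := widen_ord _ i; have lt_i1 : i.+1 < n.+1 by rewrite ltnS.
rewrite -[nat_of_ord i]/(nat_of_ord i') -[i.+1]/(nat_of_ord (Ordinal lt_i1)).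
rewrite !nth_perm_word.
have -> : [exists j : 'I_n.+1, (val j == (val i').+1) && (s i' < s j)] =
          (s i' < s (Ordinal lt_i1)).
  apply/existsP/idP => [[j /andP[/eqP j_eq]] | lt_s].
    by rewrite (_ : j = Ordinal lt_i1) //; apply: val_inj.
  by exists (Ordinal lt_i1); rewrite eqxx.
by case: (_ < _).
Qed.

Lemma perm_word_inj n : injective (@perm_word n).
Proof.
move=> s1 s2 eq_w; apply/permP => i.
by have := congr1 (nth 0 ^~ i) eq_w; rewrite !nth_perm_word => /val_inj.
Qed.

Lemma perm_word_perm_eq n (s : 'S_n) : perm_eq (perm_word s) (iota 0 n).
Proof.
rewrite /perm_word -val_enum_ord (map_comp val s) perm_map //.
apply: uniq_perm; rewrite ?enum_uniq ?(map_inj_uniq (@perm_inj _ s)) ?enum_uniq //.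
by move=> i; rewrite mem_enum; apply/mapP; exists ((s^-1)%g i); rewrite ?mem_enum ?permKV.
Qed.

Lemma perm_eq_perm_words n : perm_eq [seq perm_word s | s : 'S_n] (perm_words n).
Proof.
have uniq_w : uniq [seq perm_word s | s : 'S_n].
  by rewrite (map_inj_uniq (@perm_word_inj n)) enum_uniq.
have sub : {subset [seq perm_word s | s : 'S_n] <= perm_words n}.
  by move=> _ /mapP[s _ ->]; rewrite mem_permutations perm_word_perm_eq.
have size_le : size (perm_words n) <= size [seq perm_word s | s : 'S_n].
  by rewrite size_map -cardT card_Sn size_permutations ?iota_uniq // size_iota.
have [_ eq_mem] := uniq_min_size uniq_w sub size_le.
exact: uniq_perm uniq_w (permutations_uniq _) eq_mem.
Qed.

Lemma eulerianE n k : eulerian n k = eul n k.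
Proof.
rewrite /eulerian -sum1_card big_mkcond -sum_asc_perm_words.
rewrite -(perm_big _ (perm_eq_perm_words n)) big_map big_enum /=.
by apply: eq_bigr => s _; rewrite in_set ascents_perm_word; case: (_ == _).
Qed.

Lemma leq_scale_mul_pred c x y : c * x <= y -> c * c * (x * (x - 1)) <= y * (y - 1).
Proof.
case: c => [|c] le_cxy; first by rewrite !mul0n.
apply: leq_trans (leq_mul le_cxy (leq_sub2r 1 le_cxy)).
by rewrite mulnACA leq_mul2l mulnBr muln1 leq_sub2l ?orbT.
Qed.

Lemma eul_pairs_propagate a n m : 2 <= a ->
  2 * (3 * a + 2) ^ n < eul n a * (eul n a - 1) ->
  2 * (3 * a + 2) ^ (m + n) < eul (m + n) a * (eul (m + n) a - 1).
Proof.
move=> a_ge2 base; elim: m => [//|m IHm].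
have le_3a2 : 3 * a + 2 <= a.+1 * a.+1 by nia.
apply: leq_trans (leq_scale_mul_pred (leq_eulS _ _)).
rewrite addSn expnS mulnCA (leq_ltn_trans (leq_mul le_3a2 (leqnn _))) //.
by rewrite ltn_pmul2l.
Qed.

Lemma ltb_N_of_nat p q : (N.of_nat p <? N.of_nat q)%num = (p < q).
Proof. by case: ltnP => [/ltP | /leP] lt_pq; [apply/N.ltb_lt | apply/N.ltb_ge]; lia. Qed.

Lemma leb_N_of_nat p q : (N.of_nat p <=? N.of_nat q)%num = (p <= q).
Proof. by case: leqP => [/leP | /ltP] le_pq; [apply/N.leb_le | apply/N.leb_gt]; lia. Qed.

Lemma N_of_nat_expn b e : N.of_nat (b ^ e) = (N.of_nat b ^ N.of_nat e)%num.
Proof.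
elim: e => [|e IHe]; first by rewrite expn0.
by rewrite expnS mulnE Nat2N.inj_mul IHe Nat2N.inj_succ N.pow_succ_r'.
Qed.

Lemma pairs_gt_of_N x y :
  (2 * N.of_nat y <? N.of_nat x * (N.of_nat x - 1))%num -> 2 * y < x * (x - 1).
Proof. by rewrite -ltb_N_of_nat !mulnE subnE !Nat2N.inj_mul Nat2N.inj_sub. Qed.

(* Binary arithmetic: the base cases involve numbers with up to 170 digits. *)
Definition eul_rowN_next (n : nat) (row : seq N) : seq N :=
  [seq (N.of_nat k.+1 * nth 0 row k +
        if k is k'.+1 then N.of_nat (n - k') * nth 0 row k' else 0)%num
  | k <- iota 0 n.+2].

Fixpoint eul_rowN (n : nat) : seq N :=
  if n is n'.+1 then eul_rowN_next n' (eul_rowN n') else [:: 1%num].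

Lemma nth_eul_rowN n k : nth 0%num (eul_rowN n) k = N.of_nat (eul n k).
Proof.
elim: n k => [|n IHn] k; first by case: k => [|[|k]].
rewrite /= /eul_rowN_next; have [lt_k | le_k] := ltnP k n.+2.
  rewrite (nth_map 0) ?size_iota // nth_iota // add0n eulS.
  by case: k lt_k => [|k] _; rewrite !IHn; lia.
by rewrite nth_default ?size_map ?size_iota // eul_eq0 //; lia.
Qed.

Lemma expn_lt_eul_pairs_of_rowN n k b e :
  let x := nth 0%num (eul_rowN n) k in
  (2 * N.of_nat b ^ N.of_nat e <? x * (x - 1))%num ->
  2 * b ^ e < eul n k * (eul n k - 1).
Proof. by rewrite /= nth_eul_rowN -N_of_nat_expn; apply: pairs_gt_of_N. Qed.

Lemma eul_lt_eul_pairs_of_rowN n k j :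
  let x := nth 0%num (eul_rowN n) k in
  (2 * nth 0%num (eul_rowN n) j <? x * (x - 1))%num ->
  2 * eul n j < eul n k * (eul n k - 1).
Proof. by rewrite /= !nth_eul_rowN; apply: pairs_gt_of_N. Qed.

Lemma eul_pairs_base_small a : 3 <= a <= 29 ->
  2 * (3 * a + 2) ^ (3 * a + 2) < eul (3 * a + 2) a * (eul (3 * a + 2) a - 1).
Proof.
move=> a_range; apply: expn_lt_eul_pairs_of_rowN.
have : all (fun a => let m := 3 * a + 2 in let x := nth 0%num (eul_rowN m) a in
                   (2 * N.of_nat m ^ N.of_nat m <? x * (x - 1))%num) (iota 3 27).
  by vm_compute.
by move/allP; apply; rewrite mem_iota; lia.
Qed.

Lemma eul_pairs_a2 :
  [/\ 2 * eul 8 7 < eul 8 2 * (eul 8 2 - 1), 2 * eul 9 7 < eul 9 2 * (eul 9 2 - 1)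
    & 2 * 8 ^ 10 < eul 10 2 * (eul 10 2 - 1)].
Proof.
by split; [apply: eul_lt_eul_pairs_of_rowN | apply: eul_lt_eul_pairs_of_rowN
          | apply: expn_lt_eul_pairs_of_rowN]; vm_compute.
Qed.

Lemma leq_expn_of_N b1 e1 b2 e2 :
  (N.of_nat b1 ^ N.of_nat e1 <=? N.of_nat b2 ^ N.of_nat e2)%num -> b1 ^ e1 <= b2 ^ e2.
Proof. by rewrite -!N_of_nat_expn leb_N_of_nat. Qed.

Lemma expn_27_leq a : 30 <= a -> 27 ^ a.+1 <= a.+1 ^ a.
Proof.
move=> le_30a; rewrite -(subnK le_30a).
elim: (a - 30) => [|m IHm]; first exact: (@leq_expn_of_N 27 31 31 30).
set b := m + 30; rewrite !addSn -/b in IHm *.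
have le_27b : 27 <= b.+2 by rewrite /b; lia.
rewrite expnS [leqRHS]expnS (leq_trans (leq_mul le_27b IHm)) //.
by rewrite leq_mul2l leq_exp2r ?leqnSn ?orbT // /b addn_gt0 orbT.
Qed.

Lemma eul_pairs_base_large a : 30 <= a ->
  2 * (3 * a + 2) ^ (3 * a + 2) < eul (3 * a + 2) a * (eul (3 * a + 2) a - 1).
Proof.
move=> le_30a.
have le_L : a.+1 ^ (2 * a + 1) <= eul (3 * a + 2) a.
  by rewrite (_ : 2 * a + 1 = 3 * a + 2 - a.+1) ?expn_leq_eul //; lia.
apply: leq_trans (leq_mul le_L (leq_sub2r 1 le_L)).
set L := a.+1 ^ (2 * a + 1); set C := 3 ^ (3 * a + 2); set D := a.+1 ^ (3 * a + 2).
have le_CD : (3 * a + 2) ^ (3 * a + 2) <= C * D by rewrite -expnMn leq_exp2r; lia.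
have LL_eq : L * L = D * a.+1 ^ a by rewrite -!expnD; congr (_ ^ _); lia.
have le_3C : 3 * C <= a.+1 ^ a.
  rewrite -expnS (_ : (3 * a + 2).+1 = 3 * a.+1); last by lia.
  by rewrite expnM expn_27_leq.
have lt_LD : L < D by rewrite ltn_exp2l //; lia.
have C_gt0 : 0 < C by rewrite expn_gt0.
have le_3CD : 3 * (C * D) <= L * L by rewrite LL_eq mulnA mulnC leq_mul2l le_3C orbT.
nia.
Qed.

Lemma expn_lt_eul_pairs a n : 2 <= a -> 3 * a + 2 <= n -> (a == 2) ==> (10 <= n) ->
  2 * (3 * a + 2) ^ n < eul n a * (eul n a - 1).
Proof.
move=> a_ge2 le_n a2_n.
have [n0 [le_n0 base]] :
    exists n0, n0 <= n /\ 2 * (3 * a + 2) ^ n0 < eul n0 a * (eul n0 a - 1).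
  case: eqP a2_n => [-> /= le_10n | ne_a2 _].
    exists 10; split; first exact: le_10n.
    (* [exact], not [done], which would try to evaluate these numerals in unary. *)
    by case: eul_pairs_a2 => _ _ base10; exact: base10.
  exists (3 * a + 2); split; first exact: le_n.
  by have [le_a29 | lt_29a] := leqP a 29;
    [apply: eul_pairs_base_small | apply: eul_pairs_base_large]; lia.
by rewrite -(subnK le_n0); apply: eul_pairs_propagate.
Qed.

Lemma eul_pairs_gt a n : 2 <= a -> 3 * a + 2 <= n ->
  2 * eul n (3 * a + 1) < eul n a * (eul n a - 1).
Proof.
move=> a_ge2 le_n.
have from_expn : (a == 2) ==> (10 <= n) -> 2 * eul n (3 * a + 1) < eul n a * (eul n a - 1).
  move=> a2_n; apply: leq_ltn_trans (expn_lt_eul_pairs a_ge2 le_n a2_n).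
  by rewrite leq_mul2l (_ : 3 * a + 2 = (3 * a + 1).+1) ?eul_leq_expn ?orbT ?addnS.
have [a2 | ne_a2] := eqVneq a 2; last by apply: from_expn; rewrite (negbTE ne_a2).
have [lt_n10 | le_10n] := ltnP n 10; last by apply: from_expn; apply/implyP.
subst a; have [-> | ->] : n = 8 \/ n = 9 by lia.
  by case: eul_pairs_a2 => base8 _ _; exact: base8.
by case: eul_pairs_a2 => _ base9 _; exact: base9.
Qed.

Theorem mainTheorem20 (n r : nat) :
  3 <= r -> r <= n - 2 ->
  eulerian n (r - 1) * (eulerian n (r - 1) - 1) > 2 * eulerian n (3 * r - 2).
Proof.
move=> r_ge3 le_rn; rewrite !eulerianE.
have -> : 3 * r - 2 = 3 * (r - 1) + 1 by lia.
set a := r - 1; have a_ge2 : 2 <= a by lia.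
have [le_n | lt_n] := leqP (3 * a + 2) n; first exact: eul_pairs_gt.
have le_9 : 9 <= eul n a.
  apply: leq_trans (expn_leq_eul (_ : a < n)); last by lia.
  apply: (@leq_trans (a.+1 ^ 2)); first by rewrite expnS expn1; nia.
  by apply: leq_pexp2l; lia.
by rewrite (@eul_eq0 n) ?muln0 ?muln_gt0; lia.
Qed.
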